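(* Let $m\ge0$ and $n\ge0$ be integers. Then the polynomial $\sum_{j=0}^n(-1)^jq^{mj}\begin{bmatrix} n\\ j\end{bmatrix}_{q^2}$ is divisible by $(q;q^2)_{\lfloor (n+1)/2\rfloor}$ in $\mathbb{Z}[q]$.
   Context: $q$ is an indeterminate. $(x;q)_n=\prod_{j=0}^{n-1}(1-q^jx)$. The Gaussian binomial coefficient is $\begin{bmatrix} n\\ j\end{bmatrix}_q=\frac{(q;q)_n}{(q;q)_j(q;q)_{n-j}}$ for $0\le j\le n$ (a polynomial in $q$), and $\begin{bmatrix} n\\ j\end{bmatrix}_{q^2}$ is this with $q$ replaced by $q^2$. *)

From HB Require Import structures.
From mathcomp Require Import all_boot all_order all_algebra.
Set Implicit Arguments. Unset Strict Implicit. Unset Printing Implicit Defensive.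
Import GRing.Theory.
Local Open Scope ring_scope.

Definition qpoch (x q : {poly int}) (n : nat) : {poly int} :=
  \prod_(j < n) (1 - q ^+ j * x).

(* The quotient is taken with polynomial division
   in {poly int}; the divisor has leading coefficient +-1 (a unit), so this is
   exact Euclidean division. *)
Definition qbinom (Q : {poly int}) (n j : nat) : {poly int} :=
  qpoch Q Q n %/ (qpoch Q Q j * qpoch Q Q (n - j)).

From HB Require Import structures.
From mathcomp Require Import all_boot all_order all_algebra.
From mathcomp Require Import ring zify.
Set Implicit Arguments. Unset Strict Implicit. Unset Printing Implicit Defensive.
Import GRing.Theory.
Local Open Scope ring_scope.

(* Write A(n, m) = sum_j (-1)^j x^(m j) [n, j]_(x^2), over any commutative ring.
   The two q-Pascal rules give A(n+1, m) = A(n, m+2) - x^m A(n, m) and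
   A(n+1, m+2) = A(n, m+2) - x^(m+2+2n) A(n, m).  Eliminating A(n, m+2) gives a
   three-term recurrence in n, which for m = 0 and m = 1 has product solutions:
   A(2k, 0) = (x;x^2)_k (-x;x^2)_k, A(2k+1, 0) = 0,
   A(2k, 1) = (x;x^2)_k (-x^2;x^2)_k, A(2k+1, 1) = (x;x^2)_(k+1) (-x^2;x^2)_k.
   All of these are divisible by (x;x^2)_(ceil(n/2)), and the first rule, read as
   A(n, m+2) = A(n+1, m) + x^m A(n, m), carries divisibility from m to m + 2
   because ceil(n/2) <= ceil((n+1)/2). *)

Definition poch (R : comPzRingType) (a q : R) (n : nat) : R :=
  \prod_(j < n) (1 - q ^+ j * a).

Lemma pochS (R : comPzRingType) (a q : R) n :
  poch a q n.+1 = poch a q n * (1 - q ^+ n * a).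
Proof. by rewrite /poch big_ord_recr. Qed.

Lemma pochD (R : comPzRingType) (a q : R) k l :
  poch a q (k + l) = poch a q k * poch (q ^+ k * a) q l.
Proof.
rewrite /poch big_split_ord; congr (_ * _); apply: eq_bigr => i _.
by rewrite /= exprD; ring.
Qed.

Definition dvdr (R : comPzRingType) (a b : R) := exists c, b = c * a.

Section Divisibility.
Variable R : comPzRingType.
Implicit Types a b c : R.

Lemma dvdr_mulr a b : dvdr a (a * b).
Proof. by exists b; rewrite mulrC. Qed.

Lemma dvdr0 a : dvdr a 0.
Proof. by exists 0; rewrite mul0r. Qed.

Lemma dvdr_mull a b c : dvdr a c -> dvdr a (b * c).
Proof. by move=> [d ->]; exists (b * d); rewrite mulrA. Qed.

Lemma dvdrD a b c : dvdr a b -> dvdr a c -> dvdr a (b + c).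
Proof. by move=> [d ->] [e ->]; exists (d + e); rewrite mulrDl. Qed.

Lemma dvdr_trans a b c : dvdr a b -> dvdr b c -> dvdr a c.
Proof. by move=> [d ->] [e ->]; exists (e * d); rewrite mulrA. Qed.

Lemma dvdr_poch a q k l : (k <= l)%N -> dvdr (poch a q k) (poch a q l).
Proof. by move=> /subnKC <-; rewrite pochD; apply: dvdr_mulr. Qed.

End Divisibility.

Section GaussBinomial.
Variables (R : comPzRingType) (Q : R).

(* [n, j]_Q through the q-Pascal rule, so that it makes sense in any commutative ring. *)
Fixpoint gauss_binom (n j : nat) : R :=
  match n, j with
  | 0, 0 => 1
  | 0, _.+1 => 0
  | n'.+1, 0 => 1
  | n'.+1, j'.+1 => gauss_binom n' j' + Q ^+ j'.+1 * gauss_binom n' j'.+1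
  end.

Lemma gauss_binom0 n : gauss_binom n 0 = 1. Proof. by case: n. Qed.

Lemma gauss_binom_gt n j : (n < j)%N -> gauss_binom n j = 0.
Proof.
elim: n j => [|n IH] [|j] // ltnj /=.
by rewrite !IH ?mulr0 ?addr0 // ltnW.
Qed.

Lemma gauss_binomnn n : gauss_binom n n = 1.
Proof. by elim: n => //= n ->; rewrite gauss_binom_gt // mulr0 addr0. Qed.

Lemma gauss_binomS n j :
  gauss_binom n.+1 j.+1 = gauss_binom n j + Q ^+ j.+1 * gauss_binom n j.+1.
Proof. by []. Qed.

Lemma gauss_binomS_rev i j :
  gauss_binom (i + j).+1 j.+1 = gauss_binom (i + j) j.+1 + Q ^+ i * gauss_binom (i + j) j.
Proof.
elim: i j => [|i IHi] j.
  by rewrite add0n !gauss_binomnn gauss_binom_gt // expr0 mul1r add0r.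
elim: j => [|j IHj].
  move: (IHi 0%N); rewrite !addn0 => IH0.
  rewrite [in LHS]gauss_binomS [in LHS]IH0 [in RHS]gauss_binomS !gauss_binom0.
  by rewrite !exprS; ring.
move: IHj (IHi j.+1); rewrite !addSn !addnS; set n := (i + j)%N => IHj IHij.
rewrite [in RHS](gauss_binomS n.+1 j.+1) [in RHS](gauss_binomS n.+1 j).
rewrite (gauss_binomS n.+2 j.+1) IHj IHij.
by rewrite !exprS; ring.
Qed.

Lemma gauss_binom_poch i j :
  gauss_binom (i + j) j * poch Q Q j * poch Q Q i = poch Q Q (i + j).
Proof.
elim: i j => [|i IHi] j.
  by rewrite add0n gauss_binomnn /poch big_ord0 !mulr1 mul1r.
elim: j => [|j IHj]; first by rewrite addn0 gauss_binom0 /poch big_ord0 !mul1r.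
move: IHj (IHi j.+1); rewrite !addSn !addnS; set n := (i + j)%N => IHj IHij.
transitivity (gauss_binom n.+1 j * poch Q Q j * poch Q Q i.+1 * (1 - Q ^+ j * Q)
  + gauss_binom n.+1 j.+1 * poch Q Q j.+1 * poch Q Q i * (Q ^+ j.+1 * (1 - Q ^+ i * Q))).
  by rewrite gauss_binomS !pochS; ring.
rewrite IHj IHij [RHS]pochS.
have -> : Q ^+ n.+1 = Q ^+ i * Q ^+ j.+1 by rewrite -exprD addnS.
by rewrite !exprS; ring.
Qed.

End GaussBinomial.

Section AlternatingSum.
Variables (R : comPzRingType) (x : R).

Definition alt_term n m j := (-1) ^+ j * x ^+ (m * j) * gauss_binom (x ^+ 2) n j.
Definition alt_sum n m := \sum_(j < n.+1) alt_term n m j.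

Lemma alt_term0 n m : alt_term n m 0 = 1.
Proof. by rewrite /alt_term muln0 gauss_binom0 !mulr1. Qed.

Lemma alt_term_gt n m j : (n < j)%N -> alt_term n m j = 0.
Proof. by move=> ltnj; rewrite /alt_term gauss_binom_gt // mulr0. Qed.

Lemma sum_alt_term_succ n m :
  \sum_(j < n.+1) alt_term n m j.+1 = alt_sum n m - 1.
Proof.
rewrite /alt_sum [LHS]big_ord_recr [in RHS]big_ord_recl alt_term0 /=.
by rewrite alt_term_gt // addr0 [1 + _]addrC addrK.
Qed.

Lemma alt_sum_succ n m m' (c : R) :
    (forall j, (j <= n)%N ->
      alt_term n.+1 m' j.+1 = alt_term n m.+2 j.+1 - c * alt_term n m j) ->
  alt_sum n.+1 m' = alt_sum n m.+2 - c * alt_sum n m.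
Proof.
move=> Et; rewrite {1}/alt_sum big_ord_recl alt_term0.
rewrite (eq_bigr _ (fun (i : 'I_n.+1) _ => Et i (ltn_ord i))) sumrB -mulr_sumr.
by rewrite sum_alt_term_succ -/(alt_sum n m); ring.
Qed.

Lemma alt_sumS n m : alt_sum n.+1 m = alt_sum n m.+2 - x ^+ m * alt_sum n m.
Proof.
apply: alt_sum_succ => j _; rewrite /alt_term gauss_binomS.
have -> : x ^+ (m.+2 * j.+1) = x ^+ m * x ^+ (m * j) * (x ^+ 2) ^+ j.+1.
  by rewrite -exprM -!exprD; congr (_ ^+ _); lia.
have -> : x ^+ (m * j.+1) = x ^+ m * x ^+ (m * j) by rewrite -exprD mulnS.
by rewrite exprS; ring.
Qed.

Lemma alt_sumS_rev n m :
  alt_sum n.+1 m.+2 = alt_sum n m.+2 - x ^+ (m.+2 + n.*2) * alt_sum n m.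
Proof.
apply: alt_sum_succ => j lejn; rewrite /alt_term -(subnK lejn) gauss_binomS_rev subnK //.
have Ex : x ^+ (m.+2 * j.+1) * (x ^+ 2) ^+ (n - j) = x ^+ (m.+2 + n.*2) * x ^+ (m * j).
  by rewrite -exprM -!exprD; congr (_ ^+ _); lia.
set g1 := gauss_binom _ n j.+1; set g0 := gauss_binom _ n j.
transitivity ((-1) ^+ j.+1 * x ^+ (m.+2 * j.+1) * g1
  - (-1) ^+ j * (x ^+ (m.+2 * j.+1) * (x ^+ 2) ^+ (n - j)) * g0).
  by rewrite exprS; ring.
by rewrite Ex; ring.
Qed.

Lemma alt_sumSS n m :
  alt_sum n.+2 m = (1 - x ^+ m) * alt_sum n.+1 m + x ^+ m * (1 - x ^+ (n.+1).*2) * alt_sum n m.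
Proof.
rewrite alt_sumS alt_sumS_rev (alt_sumS n m).
have -> : x ^+ (m.+2 + n.*2) = x ^+ m * x ^+ (n.+1).*2 by rewrite -exprD; congr (_ ^+ _); lia.
ring.
Qed.

Lemma alt_sumSS0 n : alt_sum n.+2 0 = (1 - x ^+ (n.+1).*2) * alt_sum n 0.
Proof. by rewrite alt_sumSS expr0 subrr mul0r add0r mul1r. Qed.

Lemma alt_sum_odd0 k : alt_sum k.*2.+1 0 = 0.
Proof.
elim: k => [|k IHk]; last by rewrite alt_sumSS0 IHk mulr0.
rewrite /alt_sum big_ord_recr big_ord1 alt_term0 /alt_term /=; ring.
Qed.

Lemma alt_sum_double0 k : alt_sum k.*2 0 = poch x (x ^+ 2) k * poch (- x) (x ^+ 2) k.
Proof.
elim: k => [|k IHk].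
  by rewrite /alt_sum big_ord1 alt_term0 /poch !big_ord0 mulr1.
rewrite alt_sumSS0 IHk !pochS.
have -> : x ^+ (k.*2.+1).*2 = ((x ^+ 2) ^+ k * x) ^+ 2.
  by rewrite -exprM -exprSr -exprM; congr (_ ^+ _); lia.
ring.
Qed.

Lemma alt_sum1 k :
  alt_sum k.*2 1 = poch x (x ^+ 2) k * poch (- x ^+ 2) (x ^+ 2) k /\
  alt_sum k.*2.+1 1 = poch x (x ^+ 2) k.+1 * poch (- x ^+ 2) (x ^+ 2) k.
Proof.
elim: k => [|k [IHe IHo]].
  rewrite double0 /alt_sum /poch !big_ord0; split.
    by rewrite big_ord1 alt_term0 mulr1.
  by rewrite big_ord_recr !big_ord1 alt_term0 /alt_term /=; ring.
have Ee : alt_sum (k.+1).*2 1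
    = poch x (x ^+ 2) k.+1 * poch (- x ^+ 2) (x ^+ 2) k.+1.
  rewrite alt_sumSS IHe IHo !pochS expr1.
  have -> : x ^+ (k.*2.+1).*2 = ((x ^+ 2) ^+ k * x) ^+ 2.
    by rewrite -exprM -exprSr -exprM; congr (_ ^+ _); lia.
  rewrite !exprS; ring.
split=> //; rewrite alt_sumSS Ee IHo !pochS expr1.
have -> : x ^+ (k.*2.+2).*2 = ((x ^+ 2) ^+ k * x ^+ 2) ^+ 2.
  by rewrite -!exprM -exprD -exprM; congr (_ ^+ _); lia.
rewrite !exprS; ring.
Qed.

End AlternatingSum.

Lemma parity_ind (P : nat -> Prop) :
  (forall k, P k.*2) -> (forall k, P k.*2.+1) -> forall n, P n.
Proof.
by move=> Pe Po n; rewrite -[n]odd_double_half; case: (odd n); [apply: Po | apply: Pe].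
Qed.

Section PochDivides.
Variables (R : comPzRingType) (x : R).

Lemma poch_dvdr_alt_sum0 n : dvdr (poch x (x ^+ 2) (uphalf n)) (alt_sum x n 0).
Proof.
elim/parity_ind: n => k; first by rewrite uphalf_double alt_sum_double0; apply: dvdr_mulr.
by rewrite alt_sum_odd0; apply: dvdr0.
Qed.

Lemma poch_dvdr_alt_sum1 n : dvdr (poch x (x ^+ 2) (uphalf n)) (alt_sum x n 1).
Proof.
elim/parity_ind: n => k; have [Ee Eo] := alt_sum1 x k.
  by rewrite uphalf_double Ee; apply: dvdr_mulr.
by rewrite /= doubleK Eo; apply: dvdr_mulr.
Qed.

Lemma poch_dvdr_alt_sum m n : dvdr (poch x (x ^+ 2) (uphalf n)) (alt_sum x n m).
Proof.
elim/ltn_ind: m n => -[_|[_|m IH]] n.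
- exact: poch_dvdr_alt_sum0.
- exact: poch_dvdr_alt_sum1.
have -> : alt_sum x n m.+2 = alt_sum x n.+1 m + x ^+ m * alt_sum x n m.
  by rewrite alt_sumS subrK.
apply: dvdrD; last by apply/dvdr_mull/IH.
exact: dvdr_trans (dvdr_poch _ _ (half_leq (leqnSn n.+1))) (IH m _ n.+1).
Qed.

End PochDivides.

Lemma lead_coef_poch_Xn (R : idomainType) d k : (0 < d)%N ->
  lead_coef (poch ('X^d : {poly R}) 'X^d k) = (-1) ^+ k.
Proof.
move=> d_gt0; rewrite lead_coef_prod (eq_bigr (fun _ => -1)) ?prodr_const ?card_ord // => i _.
by rewrite -exprM -exprD -opprB lead_coefN -polyC1 lead_coefXnsubC // addn_gt0 d_gt0 orbT.
Qed.

Lemma qpochE : qpoch = @poch {poly int}.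
Proof. by []. Qed.

Lemma qbinom_gauss_binom n j :
  (j <= n)%N -> qbinom ('X ^+ 2) n j = gauss_binom ('X ^+ 2) n j.
Proof.
move=> /subnK <-; rewrite /qbinom qpochE addnK -gauss_binom_poch -mulrA.
apply: Pdiv.IdomainUnit.mulpK.
by rewrite lead_coefM !lead_coef_poch_Xn // -exprD unitrX // unitrN1.
Qed.

Theorem corollary2p3 (m n : nat) :
  exists r : {poly int},
    \sum_(j < n.+1) (-1) ^+ j * 'X ^+ (m * j) * qbinom ('X ^+ 2) n j
    = r * qpoch 'X ('X ^+ 2) (n.+1)./2.
Proof.
have [r Er] := poch_dvdr_alt_sum ('X : {poly int}) m n.
exists r; rewrite qpochE -[RHS]Er; apply: eq_bigr => j _.
by rewrite /alt_term qbinom_gauss_binom // -ltnS.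
Qed.
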